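(* Let $\delta:\,]0,+\infty[\to\mathbb R$ be nonnegative, bounded and continuously differentiable, and let $r:\,]\alpha,\omega[\to\,]0,+\infty[$ be a solution of $\ddot r+\delta(r)\dot r=-1/r^2$ which is maximal both to the left and to the right. Let $h(t)=\frac12\dot r(t)^2-\frac1{r(t)}$ (a nonincreasing function). If $\alpha>-\infty$, then: (i) $\lim_{t\downarrow\alpha}r(t)=0$; (ii) $h(\alpha):=\lim_{t\downarrow\alpha}h(t)<+\infty$; (iii) $\lim_{t\downarrow\alpha}\dfrac{r(t)}{(t-\alpha)^{2/3}}=\sqrt[3]{9/2}$. *)

From Stdlib Require Import Reals.
From Coquelicot Require Import Coquelicot.
Open Scope R_scope.

Definition is_sol (delta : R -> R) (a b : Rbar) (r : R -> R) : Prop :=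
  forall t : R, Rbar_lt a t -> Rbar_lt t b ->
    0 < r t /\ ex_derive r t /\ ex_derive (Derive r) t /\
    Derive (Derive r) t + delta (r t) * Derive r t = - 1 / (r t) ^ 2.

Definition maximal_left (delta : R -> R) (a b : Rbar) (r : R -> R) : Prop :=
  forall (a' : Rbar) (s : R -> R), Rbar_lt a' a -> is_sol delta a' b s ->
    (forall t : R, Rbar_lt a t -> Rbar_lt t b -> s t = r t) -> False.

Definition maximal_right (delta : R -> R) (a b : Rbar) (r : R -> R) : Prop :=
  forall (b' : Rbar) (s : R -> R), Rbar_lt b b' -> is_sol delta a b' s ->
    (forall t : R, Rbar_lt a t -> Rbar_lt t b -> s t = r t) -> False.

Definition energy (r : R -> R) (t : R) : R := / 2 * (Derive r t) ^ 2 - / r t.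

From Stdlib Require Import Reals Lra Lia Classical.
From Coquelicot Require Import Coquelicot.
Open Scope R_scope.

(* Near a finite left end alpha the solution cannot stay in a box c <= r <= C, |r'| <= Bd with
   c > 0: there the field is Lipschitz, so Picard iteration started at a point close enough to
   alpha would continue the solution to the left of alpha.  With D' = delta (r), the quantity
   r' exp D is decreasing, so once r' is positive it stays positive to the left; if r' <= 0 near
   alpha, r would stay bounded below, and a positive lower bound on r always yields such a box.  Hence r' > 0 near alpha and r decreases to 0 as t decreases to alpha.  The energy h
   is nonincreasing, and bounded near alpha because sqrt (h + c0) + M r + 2 M sqrt r is
   nondecreasing, so h has a finite limit.  Then (r' sqrt r)^2 = 2 h r + 2 tends to 2, and by
   l'Hopital r^(3/2) / (t - alpha) tends to 3/2 sqrt 2, i.e. r / (t - alpha)^(2/3) tends to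
   (9/2)^(1/3). *)

Lemma continuous_Rabs_locally (f : R -> R) (x : R) :
  continuous f x <-> forall eps : posreal, locally x (fun u => Rabs (f u - f x) < eps).
Proof.
  split; intros H.
  - apply continuity_pt_locally, continuity_pt_filterlim, H.
  - apply continuity_pt_filterlim, continuity_pt_locally, H.
Qed.

Lemma continuous_of_lipschitz (f : R -> R) (K x : R) :
  (forall y, Rabs (f y - f x) <= K * Rabs (y - x)) -> continuous f x.
Proof.
  intros Hf. apply continuous_Rabs_locally. intros eps.
  assert (HK : 0 < Rabs K + 1) by (pose proof (Rabs_pos K); lra).
  exists (mkposreal _ (Rdiv_lt_0_compat eps _ (cond_pos eps) HK)). intros y Hy.
  change (Rabs (y - x) < eps / (Rabs K + 1)) in Hy.
  apply Rmult_lt_compat_l with (r := Rabs K + 1) in Hy; [|lra].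
  replace ((Rabs K + 1) * (eps / (Rabs K + 1))) with (pos eps) in Hy by (field; lra).
  pose proof (Hf y). pose proof (Rle_abs K). pose proof (Rabs_pos (y - x)). nra.
Qed.

Definition lipschitz2 (F : R -> R -> R) (L : R) : Prop :=
  forall x y x' y', Rabs (F x y - F x' y') <= L * (Rabs (x - x') + Rabs (y - y')).

Lemma lipschitz2_nonneg (F : R -> R -> R) (L : R) : lipschitz2 F L -> 0 <= L.
Proof.
  intros HF. pose proof (HF 1 0 0 0) as H. pose proof (Rabs_pos (F 1 0 - F 0 0)).
  rewrite !Rminus_0_r, Rabs_R1, Rabs_R0 in H. lra.
Qed.

Lemma continuous_comp_lipschitz2 (F : R -> R -> R) (L : R) (X Y : R -> R) (s : R) :
  lipschitz2 F L ->
  continuous X s -> continuous Y s -> continuous (fun u => F (X u) (Y u)) s.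
Proof.
  intros HF HX HY. apply continuous_Rabs_locally. intros eps.
  assert (HL : 0 < 2 * (Rabs L + 1)) by (pose proof (Rabs_pos L); lra).
  set (e := mkposreal _ (Rdiv_lt_0_compat eps _ (cond_pos eps) HL)).
  pose proof (proj1 (continuous_Rabs_locally X s) HX e) as HXe.
  pose proof (proj1 (continuous_Rabs_locally Y s) HY e) as HYe.
  eapply filter_imp; [|exact (filter_and _ _ HXe HYe)]. intros u [Hx Hy]. simpl in Hx, Hy.
  assert (He : 2 * (Rabs L + 1) * (eps / (2 * (Rabs L + 1))) = eps) by (field; lra).
  pose proof (HF (X u) (Y u) (X s) (Y s)). pose proof (Rle_abs L).
  pose proof (Rabs_pos (X u - X s)). pose proof (Rabs_pos (Y u - Y s)). nra.
Qed.

Lemma continuous_uniform_limit (f : nat -> R -> R) (g : R -> R) (e : nat -> R) (t : R) :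
  (forall n s, Rabs (g s - f n s) <= e n) -> (forall eps, 0 < eps -> exists n, e n < eps) ->
  (forall n, continuous (f n) t) -> continuous g t.
Proof.
  intros Hfg He Hf. apply continuous_Rabs_locally. intros eps.
  destruct (He (eps / 3)) as [n Hn]; [destruct eps; simpl; lra|].
  assert (He3 : 0 < eps / 3) by (destruct eps; simpl; lra).
  eapply filter_imp; [|exact (proj1 (continuous_Rabs_locally _ _) (Hf n) (mkposreal _ He3))].
  intros u Hu. simpl in Hu.
  replace (g u - g t) with ((g u - f n u) + (f n u - f n t) - (g t - f n t)) by ring.
  pose proof (Hfg n u). pose proof (Hfg n t).
  eapply Rle_lt_trans; [apply Rabs_triang|]. rewrite Rabs_Ropp.
  eapply Rle_lt_trans; [apply Rplus_le_compat_r, Rabs_triang|]. lra.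
Qed.

Lemma nonincreasing_of_derive_nonpos (f df : R -> R) (x y : R) : x <= y ->
  (forall z, x <= z <= y -> is_derive f z (df z)) -> (forall z, x <= z <= y -> df z <= 0) ->
  f y <= f x.
Proof.
  intros Hxy Hd Hn. destruct (Req_dec x y) as [<-|Hne]; [lra|].
  destruct (MVT_gen f x y df) as [c [Hc Heq]]; rewrite ?Rmin_left, ?Rmax_right in * by lra.
  - intros z Hz. apply Hd. lra.
  - intros z Hz. apply continuity_pt_filterlim, (ex_derive_continuous f).
    exists (df z). apply Hd. lra.
  - assert (df c <= 0) by (apply Hn; lra). nra.
Qed.

Lemma nondecreasing_of_derive_nonneg (f df : R -> R) (x y : R) : x <= y ->
  (forall z, x <= z <= y -> is_derive f z (df z)) -> (forall z, x <= z <= y -> 0 <= df z) ->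
  f x <= f y.
Proof.
  intros Hxy Hd Hn.
  enough (- f y <= - f x) by lra.
  apply (nonincreasing_of_derive_nonpos (fun z => - f z) (fun z => - df z)); auto.
  - intros z Hz. apply (is_derive_opp f). auto.
  - intros z Hz. specialize (Hn z Hz). lra.
Qed.

Lemma pow_half_vanishes (K e : R) : 0 < e -> exists N, forall n, (N <= n)%nat -> K * (/2)^n < e.
Proof.
  intros He. destruct (Rle_lt_dec K 0) as [HK|HK].
  - exists 0%nat. intros n _. pose proof (pow_lt (/2) n ltac:(lra)). nra.
  - destruct (pow_lt_1_zero (/2)) with (y := e / K) as [N HN].
    + rewrite Rabs_right; lra.
    + apply Rdiv_lt_0_compat; lra.
    + exists N. intros n Hn. specialize (HN n Hn).
      rewrite Rabs_right in HN by (left; apply pow_lt; lra).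
      apply Rmult_lt_compat_l with (r := K) in HN; [|lra].
      replace (K * (e / K)) with e in HN by (field; lra). lra.
Qed.

Lemma eq0_of_le_pow_half (a K : R) : 0 <= a -> (forall n, a <= K * (/2)^n) -> a = 0.
Proof.
  intros Ha H. destruct (Req_dec a 0) as [|Hne]; auto.
  destruct (pow_half_vanishes K a) as [N HN]; [lra|].
  specialize (HN N (le_n _)). specialize (H N). lra.
Qed.

Lemma telescope_pow_half (u : nat -> R) (K : R) :
  (forall n, Rabs (u (S n) - u n) <= K * (/2)^n) ->
  forall n k, Rabs (u (k + n)%nat - u n) <= 2 * K * (/2)^n - 2 * K * (/2)^(k + n).
Proof.
  intros Hu n k. induction k as [|k IH].
  - simpl. rewrite Rminus_eq_0, Rabs_R0. lra.
  - replace (S k + n)%nat with (S (k + n)) by lia.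
    replace (u (S (k + n)) - u n) with ((u (S (k + n)) - u (k + n)%nat) + (u (k + n)%nat - u n))
      by ring.
    eapply Rle_trans; [apply Rabs_triang|].
    pose proof (Hu (k + n)%nat). simpl. lra.
Qed.

Lemma Lim_seq_pow_half (u : nat -> R) (K : R) :
  (forall n, Rabs (u (S n) - u n) <= K * (/2)^n) ->
  forall n, Rabs (Lim_seq u - u n) <= 2 * K * (/2)^n.
Proof.
  intros Hu.
  pose proof (telescope_pow_half u K Hu) as Ht.
  assert (HK : 0 <= K).
  { pose proof (Hu 0%nat). pose proof (Rabs_pos (u 1%nat - u 0%nat)). simpl in *. lra. }
  assert (Hpow : forall n, 0 < (/2)^n) by (intros; apply pow_lt; lra).
  assert (Hlim : ex_finite_lim_seq u).
  { apply ex_lim_seq_cauchy_corr. intros eps.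
    destruct (pow_half_vanishes (4 * K) eps (cond_pos eps)) as [N HN].
    exists N. intros n m Hn Hm.
    assert (HA : forall k, (N <= k)%nat -> Rabs (u k - u N) <= 2 * K * (/2)^N).
    { intros k Hk. replace k with (k - N + N)%nat by lia.
      pose proof (Ht N (k - N)%nat). pose proof (Hpow (k - N + N)%nat). nra. }
    specialize (HN N (le_n _)). pose proof (HA n Hn). pose proof (HA m Hm).
    replace (u n - u m) with ((u n - u N) - (u m - u N)) by ring.
    eapply Rle_lt_trans; [apply Rabs_triang|]. rewrite Rabs_Ropp. lra. }
  intros n.
  assert (Hl : is_lim_seq (fun k => Rabs (u (k + n)%nat - u n)) (Rabs (Lim_seq u - u n))).
  { apply (is_lim_seq_incr_n (fun k => Rabs (u k - u n))).
    apply (is_lim_seq_abs (fun k => u k - u n) (Lim_seq u - u n)), is_lim_seq_minus'.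
    - apply Lim_seq_correct', Hlim.
    - apply is_lim_seq_const. }
  enough (H : Rbar_le (Rabs (Lim_seq u - u n)) (2 * K * (/2)^n)) by exact H.
  refine (is_lim_seq_le _ _ _ _ _ Hl (is_lim_seq_const _)).
  intros k. pose proof (Ht n k). pose proof (Hpow (k + n)%nat). nra.
Qed.

Lemma at_right_Ioc (a b : R) (P : R -> Prop) :
  a < b -> (forall t, a < t <= b -> P t) -> at_right a P.
Proof.
  intros Hab H. exists (mkposreal (b - a) ltac:(lra)). intros x Hx Hax.
  change (Rabs (x - a) < b - a) in Hx. apply H. rewrite Rabs_right in Hx; lra.
Qed.

Lemma filterlim_at_right_Rabs (f : R -> R) (a l : R) :
  filterlim f (at_right a) (locally l) <->
  forall eps : posreal, exists d : posreal, forall x, a < x < a + d -> Rabs (f x - l) < eps.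
Proof.
  split.
  - intros H eps. destruct (proj1 (filterlim_locally f l) H eps) as [d Hd].
    exists d. intros x Hx. apply (Hd x); [|lra]. change (Rabs (x - a) < d).
    rewrite Rabs_right; lra.
  - intros H. apply filterlim_locally. intros eps. destruct (H eps) as [d Hd].
    exists d. intros x Hx Hax. change (Rabs (x - a) < d) in Hx.
    apply Hd. rewrite Rabs_right in Hx; lra.
Qed.

Lemma at_right_lim0_of_nondecreasing (f : R -> R) (a c : R) :
  (forall x y, a < x -> x <= y -> y <= c -> f x <= f y) -> (forall t, a < t <= c -> 0 <= f t) ->
  (forall eps, 0 < eps -> exists t, a < t <= c /\ f t < eps) ->
  filterlim f (at_right a) (locally 0).
Proof.
  intros Hf Hpos Hsmall. apply filterlim_at_right_Rabs. intros eps.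
  destruct (Hsmall eps (cond_pos eps)) as [t [Ht Hft]].
  exists (mkposreal (t - a) ltac:(lra)). simpl. intros x Hx.
  assert (f x <= f t) by (apply Hf; lra). pose proof (Hpos x ltac:(lra)).
  rewrite Rminus_0_r, Rabs_right; lra.
Qed.

Lemma nonincreasing_bounded_at_right (f : R -> R) (a b K : R) : a < b ->
  (forall x y, a < x -> x <= y -> y <= b -> f y <= f x) -> (forall t, a < t <= b -> f t <= K) ->
  exists L, filterlim f (at_right a) (locally L).
Proof.
  intros Hab Hf HK.
  set (E := fun y => exists t, a < t <= b /\ y = f t).
  destruct (completeness E) as [L [Hub Hlub]].
  - exists K. intros y [t [Ht ->]]. auto.
  - exists (f b), b. split; [lra|auto].
  - exists L. apply filterlim_at_right_Rabs. intros eps.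
    assert (Hex : exists t, a < t <= b /\ L - eps < f t).
    { apply NNPP. intros Hn. enough (L <= L - eps) by (destruct eps; simpl in *; lra).
      apply Hlub. intros y [t [Ht ->]].
      destruct (Rle_dec (f t) (L - eps)) as [|Hlt]; auto.
      exfalso. apply Hn. exists t. split; [auto|lra]. }
    destruct Hex as [t [Ht Hft]]. exists (mkposreal (t - a) ltac:(lra)). simpl.
    intros x Hx. assert (f t <= f x) by (apply Hf; lra).
    assert (f x <= L) by (apply Hub; exists x; split; [lra|auto]).
    rewrite Rabs_left1; lra.
Qed.

Lemma increment_near_linear (g dg : R -> R) (l e s t : R) : s <= t ->
  (forall x, s <= x <= t -> is_derive g x (dg x)) ->
  (forall x, s <= x <= t -> Rabs (dg x - l) <= e) ->
  Rabs (g t - g s - l * (t - s)) <= e * (t - s).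
Proof.
  intros Hst Hd He. destruct (Req_dec s t) as [<-|Hne].
  { replace (g s - g s - l * (s - s)) with 0 by ring. rewrite Rabs_R0. lra. }
  destruct (MVT_gen g s t dg) as [c [Hc Heq]]; rewrite ?Rmin_left, ?Rmax_right in * by lra.
  - intros x Hx. apply Hd. lra.
  - intros x Hx. apply continuity_pt_filterlim, (ex_derive_continuous g).
    exists (dg x). apply Hd. lra.
  - rewrite Heq. replace (dg c * (t - s) - l * (t - s)) with ((dg c - l) * (t - s)) by ring.
    rewrite Rabs_mult, (Rabs_right (t - s)) by lra.
    apply Rmult_le_compat_r; [lra | apply He; lra].
Qed.

Lemma at_right_witness (g : R -> R) (a t l k : R) : filterlim g (at_right a) (locally 0) ->
  a < t -> 0 < k -> exists s, a < s < t /\ Rabs (g s) < k /\ Rabs l * (s - a) < k.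
Proof.
  intros Hg Ht Hk. pose proof (Rabs_pos l).
  set (m := Rmin (t - a) (k / (Rabs l + 1))).
  assert (Hm : 0 < m) by (apply Rmin_pos; [lra | apply Rdiv_lt_0_compat; lra]).
  assert (Hmt : m <= t - a) by apply Rmin_l. assert (Hmk : m <= k / (Rabs l + 1)) by apply Rmin_r.
  assert (Hnear : at_right a (fun s => a < s <= a + m / 2))
    by (apply (at_right_Ioc _ (a + m / 2)); [lra | auto]).
  assert (Hsmall : at_right a (fun s => Rabs (g s - 0) < k))
    by exact (proj1 (filterlim_locally g 0) Hg (mkposreal k Hk)).
  destruct (filter_ex _ (filter_and _ _ Hnear Hsmall)) as [s [Hs Hgs]].
  rewrite Rminus_0_r in Hgs. exists s. split; [lra | split; [exact Hgs|]].
  assert (Hq : (Rabs l + 1) * (k / (Rabs l + 1)) = k) by (field; lra).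
  assert (Rabs l * (s - a) <= (Rabs l + 1) * (k / (Rabs l + 1) / 2))
    by (apply Rmult_le_compat; lra).
  lra.
Qed.

Lemma at_right_div_of_derive (g dg : R -> R) (a b l : R) : a < b ->
  (forall x, a < x <= b -> is_derive g x (dg x)) ->
  filterlim g (at_right a) (locally 0) -> filterlim dg (at_right a) (locally l) ->
  filterlim (fun t => g t / (t - a)) (at_right a) (locally l).
Proof.
  (* Compare g t with l (t - a) through a point s near a where g s is negligible, using the
     mean value estimate on [s, t]. *)
  intros Hab Hd Hg Hdg. apply filterlim_at_right_Rabs. intros eps.
  assert (He2 : 0 < eps / 2) by (destruct eps; simpl; lra).
  destruct (proj1 (filterlim_at_right_Rabs dg a l) Hdg (mkposreal _ He2)) as [d Hdl]; simpl in Hdl.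
  assert (Hba : 0 < b - a) by lra.
  exists (mkposreal (Rmin d (b - a)) (Rmin_pos _ _ (cond_pos d) Hba)). simpl.
  intros t Ht. pose proof (Rmin_l d (b - a)). pose proof (Rmin_r d (b - a)).
  set (k := eps / 4 * (t - a)).
  assert (Hk : 0 < k) by (unfold k; destruct eps; simpl in *; nra).
  destruct (at_right_witness g a t l k Hg ltac:(lra) Hk) as [s [Hs [Hgs Hls]]].
  assert (Hinc : Rabs (g t - g s - l * (t - s)) <= eps / 2 * (t - s)).
  { apply (increment_near_linear g dg); [lra | intros x Hx; apply Hd; lra |].
    intros x Hx. left. apply Hdl. lra. }
  assert (Hgt : Rabs (g t - l * (t - a)) < eps * (t - a)).
  { replace (g t - l * (t - a)) with ((g t - g s - l * (t - s)) + g s - l * (s - a)) by ring.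
    eapply Rle_lt_trans; [apply Rabs_triang|].
    rewrite Rabs_Ropp, Rabs_mult, (Rabs_right (s - a)) by lra.
    eapply Rle_lt_trans; [apply Rplus_le_compat_r, Rabs_triang|].
    unfold k in *. destruct eps; simpl in *. nra. }
  replace (g t / (t - a) - l) with ((g t - l * (t - a)) / (t - a)) by (field; lra).
  unfold Rdiv. rewrite Rabs_mult, Rabs_inv, (Rabs_right (t - a)) by lra.
  apply (Rmult_lt_reg_r (t - a)); [lra|]. rewrite Rmult_assoc, Rinv_l, Rmult_1_r by lra. exact Hgt.
Qed.

(** * Picard iteration for planar systems *)

Definition clamp (lo hi t : R) : R := Rmax lo (Rmin t hi).

Lemma clamp_bounds (lo hi t : R) : lo <= hi -> lo <= clamp lo hi t <= hi.
Proof. intros. unfold clamp, Rmax, Rmin. repeat destruct Rle_dec; lra. Qed.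

Lemma clamp_id (lo hi t : R) : lo <= t <= hi -> clamp lo hi t = t.
Proof. intros. unfold clamp, Rmax, Rmin. repeat destruct Rle_dec; lra. Qed.

Lemma clamp_lipschitz (lo hi t u : R) : Rabs (clamp lo hi t - clamp lo hi u) <= Rabs (t - u).
Proof. unfold clamp, Rmax, Rmin, Rabs. repeat destruct Rle_dec; repeat destruct Rcase_abs; lra. Qed.

Lemma abs_RInt_le_const_Rabs (f : R -> R) (a b M : R) : ex_RInt f a b ->
  (forall t, Rmin a b <= t <= Rmax a b -> Rabs (f t) <= M) ->
  Rabs (RInt f a b) <= Rabs (b - a) * M.
Proof.
  intros Hf HM. destruct (Rle_dec a b) as [Hab|Hab].
  - rewrite (Rabs_right (b - a)) by lra. apply abs_RInt_le_const; auto.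
    intros t Ht. apply HM. rewrite Rmin_left, Rmax_right; lra.
  - rewrite <- (opp_RInt_swap f b a) by (apply ex_RInt_swap; auto).
    change (Rabs (- RInt f b a) <= Rabs (b - a) * M).
    rewrite Rabs_Ropp, (Rabs_left (b - a)), Ropp_minus_distr by lra.
    apply abs_RInt_le_const; [lra | apply ex_RInt_swap; auto |].
    intros t Ht. apply HM. rewrite Rmin_right, Rmax_left; lra.
Qed.

Lemma is_derive_RInt_continuous (g : R -> R) (a t : R) : (forall s, continuous g s) ->
  is_derive (fun u => RInt g a u) t (g t).
Proof.
  intros Hg. apply (is_derive_RInt g _ a); [|apply Hg].
  apply filter_forall. intros u. apply (RInt_correct (V := R_CompleteNormedModule)).
  apply (ex_RInt_continuous (V := R_CompleteNormedModule)). auto.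
Qed.

Section Picard.

Variables (t0 eta : R).
Hypothesis eta_pos : 0 < eta.

(* Clamping time to [t0 - eta, t0 + eta] makes every iterate defined, continuous and bounded
   on the whole line. *)
Definition picard_step (F : R -> R -> R) (z0 : R) (X Y : R -> R) (t : R) : R :=
  z0 + RInt (fun s => F (X s) (Y s)) t0 (clamp (t0 - eta) (t0 + eta) t).

Lemma abs_RInt_clamp_le (g : R -> R) (M t : R) : (forall s, continuous g s) ->
  (forall s, Rabs (g s) <= M) -> Rabs (RInt g t0 (clamp (t0 - eta) (t0 + eta) t)) <= eta * M.
Proof.
  intros Hc Hb. pose proof (clamp_bounds (t0 - eta) (t0 + eta) t ltac:(lra)).
  assert (0 <= M) by (pose proof (Hb 0); pose proof (Rabs_pos (g 0)); lra).
  eapply Rle_trans; [apply abs_RInt_le_const_Rabs; auto|].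
  { apply (ex_RInt_continuous (V := R_CompleteNormedModule)). auto. }
  apply Rmult_le_compat_r; auto. unfold Rabs. destruct Rcase_abs; lra.
Qed.

Section Step.

Variables (F : R -> R -> R) (B L : R).
Hypothesis F_bounded : forall x y, Rabs (F x y) <= B.
Hypothesis F_lipschitz : lipschitz2 F L.

Variables (X Y : R -> R) (z0 : R).
Hypotheses (X_cont : forall s, continuous X s) (Y_cont : forall s, continuous Y s).

Let F_comp_cont (s : R) : continuous (fun u => F (X u) (Y u)) s :=
  continuous_comp_lipschitz2 F L X Y s F_lipschitz (X_cont s) (Y_cont s).

Lemma picard_step_continuous (t : R) : continuous (picard_step F z0 X Y) t.
Proof.
  apply (continuous_plus (fun _ => z0)); [apply continuous_const|].
  apply (continuous_comp (clamp (t0 - eta) (t0 + eta))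
    (fun u => RInt (fun s => F (X s) (Y s)) t0 u)).
  - apply (continuous_of_lipschitz _ 1). intros u. rewrite Rmult_1_l. apply clamp_lipschitz.
  - apply (ex_derive_continuous (fun u => RInt (fun s => F (X s) (Y s)) t0 u)).
    eexists. apply is_derive_RInt_continuous, F_comp_cont.
Qed.

Lemma picard_step_t0 : picard_step F z0 X Y t0 = z0.
Proof. unfold picard_step. rewrite clamp_id, RInt_point by lra. apply Rplus_0_r. Qed.

Lemma picard_step_dev (t : R) : Rabs (picard_step F z0 X Y t - z0) <= eta * B.
Proof.
  unfold picard_step. rewrite Rplus_minus_l. apply abs_RInt_clamp_le; auto.
Qed.

Lemma is_derive_picard_step (t : R) : t0 - eta < t < t0 + eta ->
  is_derive (picard_step F z0 X Y) t (F (X t) (Y t)).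
Proof.
  intros Ht. apply (is_derive_ext_loc (fun u => z0 + RInt (fun s => F (X s) (Y s)) t0 u)).
  - apply (locally_interval _ t (t0 - eta) (t0 + eta)); try (simpl; lra).
    intros u Hu1 Hu2. simpl in Hu1, Hu2. unfold picard_step. rewrite clamp_id; auto. lra.
  - pose proof (is_derive_plus (fun _ => z0) _ t zero _ (is_derive_const z0 t)
      (is_derive_RInt_continuous _ t0 t F_comp_cont)) as H.
    rewrite plus_zero_l in H. exact H.
Qed.

Variables (U V : R -> R).
Hypotheses (U_cont : forall s, continuous U s) (V_cont : forall s, continuous V s).

Lemma picard_step_contraction (d t : R) :
  (forall s, Rabs (X s - U s) + Rabs (Y s - V s) <= d) ->
  Rabs (picard_step F z0 X Y t - picard_step F z0 U V t) <= eta * (L * d).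
Proof.
  intros Hd. unfold picard_step.
  set (T := clamp (t0 - eta) (t0 + eta) t).
  assert (Hcont : forall s, continuous (fun u => F (U u) (V u)) s)
    by (intros; apply (continuous_comp_lipschitz2 F L); auto).
  replace (z0 + _ - _) with (RInt (fun s => F (X s) (Y s) - F (U s) (V s)) t0 T).
  - apply abs_RInt_clamp_le.
    + intros s. apply (continuous_minus (fun u => F (X u) (Y u))); auto.
    + intros s. eapply Rle_trans; [apply F_lipschitz|].
      apply Rmult_le_compat_l; [exact (lipschitz2_nonneg F L F_lipschitz) | auto].
  - rewrite (RInt_minus (fun s => F (X s) (Y s)));
      try (apply (ex_RInt_continuous (V := R_CompleteNormedModule)); auto).
    change (RInt (fun s => F (X s) (Y s)) t0 T - RInt (fun s => F (U s) (V s)) t0 T =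
      z0 + RInt (fun s => F (X s) (Y s)) t0 T - (z0 + RInt (fun s => F (U s) (V s)) t0 T)).
    ring.
Qed.

End Step.

Variables (F1 F2 : R -> R -> R) (B L x0 y0 : R).
Hypotheses (F1_bounded : forall x y, Rabs (F1 x y) <= B)
  (F2_bounded : forall x y, Rabs (F2 x y) <= B)
  (F1_lipschitz : lipschitz2 F1 L) (F2_lipschitz : lipschitz2 F2 L)
  (contracting : 4 * L * eta <= 1).

Fixpoint picard_iter (n : nat) : (R -> R) * (R -> R) :=
  match n with
  | O => (fun _ => x0, fun _ => y0)
  | S n => let XY := picard_iter n in
      (picard_step F1 x0 (fst XY) (snd XY), picard_step F2 y0 (fst XY) (snd XY))
  end.

Let X (n : nat) : R -> R := fst (picard_iter n).
Let Y (n : nat) : R -> R := snd (picard_iter n).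

Lemma picard_iter_continuous (n : nat) (s : R) : continuous (X n) s /\ continuous (Y n) s.
Proof.
  revert s. induction n as [|n IH]; intros s.
  - split; apply continuous_const.
  - split; [apply (picard_step_continuous F1 L) | apply (picard_step_continuous F2 L)];
      auto; apply IH.
Qed.

Let X_cont (n : nat) (s : R) : continuous (X n) s := proj1 (picard_iter_continuous n s).
Let Y_cont (n : nat) (s : R) : continuous (Y n) s := proj2 (picard_iter_continuous n s).

Let K : R := 2 * B * eta.

Lemma picard_iter_increment (n : nat) (t : R) :
  Rabs (X (S n) t - X n t) + Rabs (Y (S n) t - Y n t) <= K * (/2)^n.
Proof.
  revert t. induction n as [|n IH]; intros t.
  - pose proof (picard_step_dev F1 B L F1_bounded F1_lipschitz _ _ x0 (X_cont 0) (Y_cont 0) t).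
    pose proof (picard_step_dev F2 B L F2_bounded F2_lipschitz _ _ y0 (X_cont 0) (Y_cont 0) t).
    change (X 1%nat) with (picard_step F1 x0 (X 0) (Y 0)).
    change (Y 1%nat) with (picard_step F2 y0 (X 0) (Y 0)).
    change (X 0%nat t) with x0. change (Y 0%nat t) with y0. unfold K. simpl pow. lra.
  - pose proof (picard_step_contraction F1 L F1_lipschitz _ _ x0 (X_cont (S n)) (Y_cont (S n))
      _ _ (X_cont n) (Y_cont n) _ t IH).
    pose proof (picard_step_contraction F2 L F2_lipschitz _ _ y0 (X_cont (S n)) (Y_cont (S n))
      _ _ (X_cont n) (Y_cont n) _ t IH).
    pose proof (lipschitz2_nonneg F1 L F1_lipschitz).
    assert (0 <= K * (/2)^n) by (pose proof (IH t);
      pose proof (Rabs_pos (X (S n) t - X n t)); pose proof (Rabs_pos (Y (S n) t - Y n t)); lra).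
    change (Rabs (picard_step F1 x0 (X (S n)) (Y (S n)) t - picard_step F1 x0 (X n) (Y n) t)
      + Rabs (picard_step F2 y0 (X (S n)) (Y (S n)) t - picard_step F2 y0 (X n) (Y n) t)
      <= K * (/2 * (/2)^n)).
    nra.
Qed.

Let Xlim (t : R) : R := Lim_seq (fun n => X n t).
Let Ylim (t : R) : R := Lim_seq (fun n => Y n t).

Lemma picard_lim_approx (n : nat) (t : R) :
  Rabs (Xlim t - X n t) <= 2 * K * (/2)^n /\ Rabs (Ylim t - Y n t) <= 2 * K * (/2)^n.
Proof.
  split; apply (Lim_seq_pow_half (fun n => _ n t)); intros m;
    pose proof (picard_iter_increment m t);
    pose proof (Rabs_pos (X (S m) t - X m t)); pose proof (Rabs_pos (Y (S m) t - Y m t)); lra.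
Qed.

Lemma picard_lim_continuous (t : R) : continuous Xlim t /\ continuous Ylim t.
Proof.
  assert (Hvan : forall eps, 0 < eps -> exists n, 2 * K * (/2)^n < eps).
  { intros eps Heps. destruct (pow_half_vanishes (2 * K) eps Heps) as [N HN].
    exists N. apply HN. lia. }
  split; [apply (continuous_uniform_limit X _ (fun n => 2 * K * (/2)^n))
    | apply (continuous_uniform_limit Y _ (fun n => 2 * K * (/2)^n))];
    auto; intros; apply picard_lim_approx || apply picard_iter_continuous.
Qed.

Lemma picard_lim_fixed (F : R -> R -> R) (z0 : R) (Z : nat -> R -> R) (Zlim : R -> R) (t : R) :
  lipschitz2 F L ->
  (forall n, Z (S n) = picard_step F z0 (X n) (Y n)) ->
  (forall n, Rabs (Zlim t - Z n t) <= 2 * K * (/2)^n) ->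
  Zlim t = picard_step F z0 Xlim Ylim t.
Proof.
  intros HF HZ Happrox.
  apply Rminus_diag_uniq, Rabs_eq_0, (eq0_of_le_pow_half _ (K + eta * L * 4 * K));
    [apply Rabs_pos|]. intros n.
  assert (Hd : forall s, Rabs (X n s - Xlim s) + Rabs (Y n s - Ylim s) <= 4 * K * (/2)^n).
  { intros s. rewrite (Rabs_minus_sym (X n s)), (Rabs_minus_sym (Y n s)).
    destruct (picard_lim_approx n s). lra. }
  pose proof (picard_step_contraction F L HF _ _ z0 (X_cont n) (Y_cont n)
    Xlim Ylim (fun s => proj1 (picard_lim_continuous s)) (fun s => proj2 (picard_lim_continuous s))
    _ t Hd).
  pose proof (Happrox (S n)) as HS. rewrite HZ in HS.
  replace (Zlim t - picard_step F z0 Xlim Ylim t) with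
    ((Zlim t - picard_step F z0 (X n) (Y n) t) +
     (picard_step F z0 (X n) (Y n) t - picard_step F z0 Xlim Ylim t)) by ring.
  eapply Rle_trans; [apply Rabs_triang|]. simpl pow in HS. lra.
Qed.

Theorem picard_existence : exists X Y : R -> R, X t0 = x0 /\ Y t0 = y0 /\
  (forall t, t0 - eta < t < t0 + eta ->
    is_derive X t (F1 (X t) (Y t)) /\ is_derive Y t (F2 (X t) (Y t))) /\
  (forall t, Rabs (X t - x0) <= eta * B /\ Rabs (Y t - y0) <= eta * B).
Proof.
  assert (HX : forall t, Xlim t = picard_step F1 x0 Xlim Ylim t).
  { intros t. apply (picard_lim_fixed F1 x0 X); [auto | reflexivity |].
    intros n. apply picard_lim_approx. }
  assert (HY : forall t, Ylim t = picard_step F2 y0 Xlim Ylim t).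
  { intros t. apply (picard_lim_fixed F2 y0 Y); [auto | reflexivity |].
    intros n. apply picard_lim_approx. }
  assert (HXc : forall s, continuous Xlim s) by apply picard_lim_continuous.
  assert (HYc : forall s, continuous Ylim s) by apply picard_lim_continuous.
  exists Xlim, Ylim. rewrite HX, HY, !picard_step_t0 by lra. do 2 (split; [reflexivity|]). split.
  - intros t Ht. split.
    + apply (is_derive_ext (picard_step F1 x0 Xlim Ylim)); [intros; symmetry; apply HX|].
      apply (is_derive_picard_step F1 L); auto.
    + apply (is_derive_ext (picard_step F2 y0 Xlim Ylim)); [intros; symmetry; apply HY|].
      apply (is_derive_picard_step F2 L); auto.
  - intros t. rewrite HX, HY. split; eapply picard_step_dev; eauto.
Qed.

End Picard.

(** * Uniqueness for planar systems *)

Lemma is_derive_mult_exp (f g : R -> R) (x lf lg : R) : is_derive f x lf -> is_derive g x lg ->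
  is_derive (fun u => f u * exp (g u)) x ((lf + lg * f x) * exp (g x)).
Proof.
  intros Hf Hg. auto_derive; [split; [eexists; eauto | split; [eexists; eauto | auto]]|].
  replace (Derive (fun u => f u) x) with lf by (symmetry; now apply is_derive_unique).
  replace (Derive (fun u => g u) x) with lg by (symmetry; now apply is_derive_unique). ring.
Qed.

Lemma is_derive_linear (k x : R) : is_derive (fun u => k * u) x k.
Proof. auto_derive; [auto | ring]. Qed.

Lemma eq0_of_abs_derive_le (E dE : R -> R) (k a b t0 : R) : a < t0 < b ->
  (forall t, a < t < b -> is_derive E t (dE t)) ->
  (forall t, a < t < b -> Rabs (dE t) <= k * E t) ->
  (forall t, a < t < b -> 0 <= E t) -> E t0 = 0 ->
  forall t, a < t < b -> E t = 0.
Proof.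
  intros Ht0 HdE Hgr Hpos HE0 t Ht.
  pose proof (exp_pos (k * t)). pose proof (exp_pos (- k * t)). pose proof (Hpos t Ht).
  destruct (Rle_dec t0 t) as [Hle|Hlt].
  - enough (E t * exp (- k * t) <= E t0 * exp (- k * t0)) by (rewrite HE0 in *; nra).
    apply (nonincreasing_of_derive_nonpos (fun u => E u * exp (- k * u))
      (fun u => (dE u + - k * E u) * exp (- k * u)));
      [lra | intros; apply is_derive_mult_exp; [apply HdE; lra | apply is_derive_linear] |].
    intros u Hu. pose proof (exp_pos (- k * u)).
    pose proof (Rle_abs (dE u)). pose proof (Hgr u ltac:(lra)). nra.
  - enough (E t * exp (k * t) <= E t0 * exp (k * t0)) by (rewrite HE0 in *; nra).
    apply (nondecreasing_of_derive_nonneg (fun u => E u * exp (k * u))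
      (fun u => (dE u + k * E u) * exp (k * u)));
      [lra | intros; apply is_derive_mult_exp; [apply HdE; lra | apply is_derive_linear] |].
    intros u Hu. pose proof (exp_pos (k * u)).
    pose proof (Rle_abs (- dE u)). rewrite Rabs_Ropp in *. pose proof (Hgr u ltac:(lra)). nra.
Qed.

Lemma abs_cross_term_le (L p q d1 d2 : R) : 0 <= L ->
  Rabs d1 <= L * (Rabs p + Rabs q) -> Rabs d2 <= L * (Rabs p + Rabs q) ->
  Rabs (2 * p * d1 + 2 * q * d2) <= 4 * L * (p ^ 2 + q ^ 2).
Proof.
  intros HL H1 H2. rewrite <- (pow2_abs p), <- (pow2_abs q).
  eapply Rle_trans; [apply Rabs_triang|]. rewrite !Rabs_mult, (Rabs_right 2) by lra.
  pose proof (Rabs_pos p). pose proof (Rabs_pos q).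
  pose proof (Rabs_pos d1). pose proof (Rabs_pos d2).
  assert (Rabs p * Rabs d1 <= Rabs p * (L * (Rabs p + Rabs q))) by (apply Rmult_le_compat_l; auto).
  assert (Rabs q * Rabs d2 <= Rabs q * (L * (Rabs p + Rabs q))) by (apply Rmult_le_compat_l; auto).
  assert (0 <= L * (Rabs p - Rabs q) ^ 2) by (apply Rmult_le_pos; [auto | apply pow2_ge_0]).
  nra.
Qed.

Lemma planar_uniqueness (F1 F2 : R -> R -> R) (L : R) (X Y U V : R -> R) (a b t0 : R) :
  lipschitz2 F1 L -> lipschitz2 F2 L -> a < t0 < b ->
  (forall t, a < t < b -> is_derive X t (F1 (X t) (Y t)) /\ is_derive Y t (F2 (X t) (Y t))) ->
  (forall t, a < t < b -> is_derive U t (F1 (U t) (V t)) /\ is_derive V t (F2 (U t) (V t))) ->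
  X t0 = U t0 -> Y t0 = V t0 ->
  forall t, a < t < b -> X t = U t /\ Y t = V t.
Proof.
  intros HL1 HL2 Ht0 HXY HUV E1 E2 t Ht.
  set (dE := fun t => 2 * (X t - U t) * (F1 (X t) (Y t) - F1 (U t) (V t))
                    + 2 * (Y t - V t) * (F2 (X t) (Y t) - F2 (U t) (V t))).
  assert (HE : (X t - U t) ^ 2 + (Y t - V t) ^ 2 = 0).
  { apply (eq0_of_abs_derive_le (fun t => (X t - U t) ^ 2 + (Y t - V t) ^ 2) dE (4 * L) a b t0);
      auto.
    - intros u Hu. destruct (HXY u Hu) as [HX HY]. destruct (HUV u Hu) as [HU HV].
      auto_derive; [repeat split; eexists; eauto|].
      replace (Derive (fun x => X x) u) with (F1 (X u) (Y u))
        by (symmetry; now apply is_derive_unique).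
      replace (Derive (fun x => Y x) u) with (F2 (X u) (Y u))
        by (symmetry; now apply is_derive_unique).
      replace (Derive (fun x => U x) u) with (F1 (U u) (V u))
        by (symmetry; now apply is_derive_unique).
      replace (Derive (fun x => V x) u) with (F2 (U u) (V u))
        by (symmetry; now apply is_derive_unique).
      unfold dE. ring.
    - intros u _.
      apply abs_cross_term_le; [exact (lipschitz2_nonneg F1 L HL1) | apply HL1 | apply HL2].
    - intros u _. pose proof (pow2_ge_0 (X u - U u)). pose proof (pow2_ge_0 (Y u - V u)). lra.
    - rewrite E1, E2. ring. }
  pose proof (pow2_ge_0 (X t - U t)). pose proof (pow2_ge_0 (Y t - V t)).
  split; apply Rminus_diag_uniq; nra.
Qed.

(** * Extension of solutions to the left *)

Definition damped_field (delta : R -> R) (x y : R) : R := - 1 / x ^ 2 - delta x * y.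

Definition sol_at (delta r : R -> R) (t : R) : Prop :=
  0 < r t /\ ex_derive r t /\ ex_derive (Derive r) t /\
  Derive (Derive r) t + delta (r t) * Derive r t = - 1 / (r t) ^ 2.

Lemma sol_at_ext_loc (delta r s : R -> R) (t : R) :
  locally t (fun u => s u = r u) -> sol_at delta r t -> sol_at delta s t.
Proof.
  intros Hsr [Hr [Hd1 [Hd2 Hode]]].
  assert (HD : locally t (fun u => Derive r u = Derive s u)).
  { apply (filter_imp (fun u => locally u (fun v => s v = r v))); [|apply locally_locally, Hsr].
    intros u Hu. apply Derive_ext_loc. eapply filter_imp; [|exact Hu]. auto. }
  assert (Hst : s t = r t) by apply (locally_singleton _ _ Hsr).
  assert (HDt : Derive s t = Derive r t) by (symmetry; apply (locally_singleton _ _ HD)).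
  unfold sol_at. rewrite Hst, HDt, <- (Derive_ext_loc _ _ t HD). repeat split; auto.
  - apply (ex_derive_ext_loc r); auto. eapply filter_imp; [|exact Hsr]. auto.
  - apply (ex_derive_ext_loc (Derive r)); auto.
Qed.

Lemma sol_at_of_planar (delta X Y : R -> R) (t : R) : 0 < X t ->
  locally t (fun u => is_derive X u (Y u) /\ is_derive Y u (damped_field delta (X u) (Y u))) ->
  sol_at delta X t.
Proof.
  intros HX Hloc. destruct (locally_singleton _ _ Hloc) as [HdX HdY].
  assert (HD : locally t (fun u => Y u = Derive X u)).
  { eapply filter_imp; [|exact Hloc]. intros u [Hu _]. symmetry. apply is_derive_unique, Hu. }
  split; [exact HX|]. split; [eexists; exact HdX|]. split.
  - apply (ex_derive_ext_loc Y); [exact HD | eexists; exact HdY].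
  - rewrite <- (Derive_ext_loc _ _ t HD), (is_derive_unique _ _ _ HdY),
      (is_derive_unique _ _ _ HdX).
    unfold damped_field. ring.
Qed.

Definition solves_on (delta : R -> R) (a b : R) (r : R -> R) : Prop :=
  forall t, a < t < b -> 0 < r t /\ is_derive r t (Derive r t) /\
    is_derive (Derive r) t (damped_field delta (r t) (Derive r t)).

Lemma solves_on_of_is_sol (delta r : R -> R) (a b : R) (omega : Rbar) :
  is_sol delta a omega r -> Rbar_le b omega -> solves_on delta a b r.
Proof.
  intros Hsol Hb t Ht.
  assert (Htw : Rbar_lt t omega) by (eapply Rbar_lt_le_trans; [|exact Hb]; simpl; lra).
  destruct (Hsol t ltac:(simpl; lra) Htw) as [Hr [Hd1 [Hd2 Hode]]].
  split; [exact Hr|]. split; [apply Derive_correct, Hd1|].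
  replace (damped_field delta (r t) (Derive r t)) with (Derive (Derive r) t)
    by (unfold damped_field; lra).
  apply Derive_correct, Hd2.
Qed.

Lemma not_maximal_left_of_extension (delta r X : R -> R) (alpha : R) (omega : Rbar) (e1 e2 : R) :
  0 < e1 -> 0 < e2 -> is_sol delta alpha omega r -> maximal_left delta alpha omega r ->
  (forall t, alpha - e1 < t < alpha + e2 -> sol_at delta X t) ->
  (forall t, alpha < t < alpha + e2 -> X t = r t) -> False.
Proof.
  intros He1 He2 Hsol Hmax HX HXr.
  set (s := fun t => if Rlt_dec alpha t then r t else X t).
  apply (Hmax (alpha - e1) s); [simpl; lra | | ].
  - intros t Ht Htw. simpl in Ht. destruct (Rlt_dec alpha t) as [Hat|Hat].
    + apply (sol_at_ext_loc delta r); [| apply Hsol; auto].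
      apply (locally_interval _ t alpha p_infty); [simpl; lra | exact I |].
      intros u Hu _. unfold s. simpl in Hu. destruct (Rlt_dec alpha u); [reflexivity | lra].
    + apply (sol_at_ext_loc delta X); [| apply HX; lra].
      apply (locally_interval _ t (alpha - e1) (alpha + e2)); simpl; try lra.
      intros u Hu1 Hu2. unfold s. destruct (Rlt_dec alpha u); [symmetry; apply HXr|]; lra.
  - intros t Ht _. unfold s. simpl in Ht. destruct (Rlt_dec alpha t); [reflexivity | lra].
Qed.

Lemma lipschitz_on_of_continuous_derive (f : R -> R) (lo hi : R) : lo <= hi ->
  (forall x, lo <= x <= hi -> ex_derive f x /\ continuous (Derive f) x) ->
  exists D, 0 <= D /\
    forall a b, lo <= a <= hi -> lo <= b <= hi -> Rabs (f a - f b) <= D * Rabs (a - b).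
Proof.
  intros Hlh Hf.
  destruct (continuity_ab_maj (fun x => Rabs (Derive f x)) lo hi Hlh) as [xm [Hxm _]].
  { intros z Hz. apply continuity_pt_filterlim, (continuous_Rabs_comp (Derive f)), Hf, Hz. }
  exists (Rabs (Derive f xm)). split; [apply Rabs_pos|]. intros a b Ha Hb.
  assert (Hin : forall z, Rmin b a <= z <= Rmax b a -> lo <= z <= hi).
  { intros z Hz. unfold Rmin, Rmax in Hz. destruct Rle_dec; lra. }
  destruct (MVT_gen f b a (Derive f)) as [z [Hz ->]].
  - intros x Hx. apply Derive_correct, Hf, Hin. lra.
  - intros x Hx. apply continuity_pt_filterlim, (ex_derive_continuous f), Hf, Hin, Hx.
  - rewrite Rabs_mult. apply Rmult_le_compat_r; [apply Rabs_pos|]. apply Hxm, Hin, Hz.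
Qed.

Lemma abs_inv_sq_sub_le (m Mx u u' : R) : 0 < m -> m <= u <= Mx -> m <= u' <= Mx ->
  Rabs (1 / u ^ 2 - 1 / u' ^ 2) <= 2 * Mx / m ^ 4 * Rabs (u - u').
Proof.
  intros Hm Hu Hu'.
  replace (1 / u ^ 2 - 1 / u' ^ 2) with ((u' + u) / (u ^ 2 * u' ^ 2) * - (u - u')) by (field; lra).
  rewrite Rabs_mult, Rabs_Ropp. apply Rmult_le_compat_r; [apply Rabs_pos|].
  assert (Hmu : m ^ 2 <= u ^ 2) by (apply pow_incr; lra).
  assert (Hmu' : m ^ 2 <= u' ^ 2) by (apply pow_incr; lra).
  assert (Hm4 : 0 < m ^ 4) by (apply pow_lt; lra).
  rewrite Rabs_right
    by (apply Rle_ge, Rdiv_le_0_compat; [lra | apply Rmult_lt_0_compat; apply pow_lt; lra]).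
  unfold Rdiv. apply Rmult_le_compat; [lra | left; apply Rinv_0_lt_compat; nra | lra |].
  apply Rinv_le_contravar; [exact Hm4|]. replace (m ^ 4) with (m ^ 2 * m ^ 2) by ring.
  apply Rmult_le_compat; nra.
Qed.

Section DampedField.

Variables (delta : R -> R) (M D m Mx V : R).
Hypotheses (m_pos : 0 < m) (V_nonneg : 0 <= V) (D_nonneg : 0 <= D).
Hypothesis delta_bounded : forall x, m <= x <= Mx -> Rabs (delta x) <= M.
Hypothesis delta_lipschitz :
  forall x x', m <= x <= Mx -> m <= x' <= Mx -> Rabs (delta x - delta x') <= D * Rabs (x - x').

Lemma damped_field_bounded (x y : R) : m <= x <= Mx -> Rabs y <= V ->
  Rabs (damped_field delta x y) <= / m ^ 2 + M * V.
Proof.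
  intros Hx Hy. unfold damped_field.
  replace (- 1 / x ^ 2 - delta x * y) with (- (/ x ^ 2) - delta x * y) by (field; lra).
  eapply Rle_trans; [apply Rabs_triang|]. rewrite Rabs_Ropp, Rabs_Ropp, Rabs_mult.
  apply Rplus_le_compat.
  - rewrite Rabs_right by (apply Rle_ge, Rlt_le, Rinv_0_lt_compat, pow_lt; lra).
    apply Rinv_le_contravar; [apply pow_lt; lra | apply pow_incr; lra].
  - apply Rmult_le_compat; try apply Rabs_pos; auto.
Qed.

Lemma damped_field_lipschitz (x y x' y' : R) :
  m <= x <= Mx -> m <= x' <= Mx -> Rabs y <= V -> Rabs y' <= V ->
  Rabs (damped_field delta x y - damped_field delta x' y') <=
    (2 * Mx / m ^ 4 + V * D + M) * (Rabs (x - x') + Rabs (y - y')).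
Proof.
  intros Hx Hx' Hy Hy'. unfold damped_field.
  replace (- 1 / x ^ 2 - delta x * y - (- 1 / x' ^ 2 - delta x' * y')) with
    (- (1 / x ^ 2 - 1 / x' ^ 2) - (y' * (delta x - delta x') + delta x * (y - y'))) by (field; lra).
  pose proof (abs_inv_sq_sub_le m Mx x x' m_pos Hx Hx') as H1.
  assert (H2 : Rabs (y' * (delta x - delta x')) <= V * (D * Rabs (x - x'))).
  { rewrite Rabs_mult. apply Rmult_le_compat; try apply Rabs_pos; auto. }
  assert (H3 : Rabs (delta x * (y - y')) <= M * Rabs (y - y')).
  { rewrite Rabs_mult. apply Rmult_le_compat_r; [apply Rabs_pos | auto]. }
  assert (HM : 0 <= M) by (pose proof (delta_bounded x Hx); pose proof (Rabs_pos (delta x)); lra).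
  assert (0 <= 2 * Mx / m ^ 4) by (apply Rdiv_le_0_compat; [lra | apply pow_lt; lra]).
  pose proof (Rabs_pos (x - x')). pose proof (Rabs_pos (y - y')).
  eapply Rle_trans; [apply Rabs_triang|]. rewrite Rabs_Ropp.
  eapply Rle_trans; [apply Rplus_le_compat_l; rewrite Rabs_Ropp; apply Rabs_triang|].
  assert (0 <= V * D) by (apply Rmult_le_pos; auto). nra.
Qed.

End DampedField.

Lemma lipschitz2_clamp (F : R -> R -> R) (L lo1 hi1 lo2 hi2 : R) :
  lo1 <= hi1 -> lo2 <= hi2 -> 0 <= L ->
  (forall x y x' y', lo1 <= x <= hi1 -> lo1 <= x' <= hi1 -> lo2 <= y <= hi2 -> lo2 <= y' <= hi2 ->
    Rabs (F x y - F x' y') <= L * (Rabs (x - x') + Rabs (y - y'))) ->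
  lipschitz2 (fun x y => F (clamp lo1 hi1 x) (clamp lo2 hi2 y)) L.
Proof.
  intros H1 H2 HL HF x y x' y'.
  eapply Rle_trans; [apply HF; apply clamp_bounds; auto|].
  apply Rmult_le_compat_l; [exact HL|].
  apply Rplus_le_compat; apply clamp_lipschitz.
Qed.

(* Clamping freezes the field outside the box [c, C] x [-V, V], making it globally bounded and
   Lipschitz. *)
Lemma clamped_damped_system_regular (delta : R -> R) (M c C V : R) :
  (forall x, 0 < x -> Rabs (delta x) <= M) ->
  (forall x, 0 < x -> ex_derive delta x /\ continuous (Derive delta) x) ->
  0 < c -> c <= C -> 0 <= V ->
  exists L B,
    lipschitz2 (fun (_ : R) y => clamp (- V) V y) L /\
    lipschitz2 (fun x y => damped_field delta (clamp c C x) (clamp (- V) V y)) L /\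
    (forall x y : R, Rabs (clamp (- V) V y) <= B) /\
    (forall x y, Rabs (damped_field delta (clamp c C x) (clamp (- V) V y)) <= B).
Proof.
  intros HM HC1 Hc HcC HV.
  destruct (lipschitz_on_of_continuous_derive delta c C HcC) as [D [HD HDlip]];
    [intros; apply HC1; lra|].
  assert (HM0 : 0 <= M) by (pose proof (HM c Hc); pose proof (Rabs_pos (delta c)); lra).
  set (Lf := 2 * C / c ^ 4 + V * D + M).
  assert (HLf : 0 <= Lf).
  { assert (0 <= 2 * C / c ^ 4) by (apply Rdiv_le_0_compat; [lra | apply pow_lt; lra]).
    assert (0 <= V * D) by (apply Rmult_le_pos; auto). unfold Lf. lra. }
  assert (HVclamp : forall y, Rabs (clamp (- V) V y) <= V).
  { intros y. apply Rabs_le, clamp_bounds. lra. }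
  exists (1 + Lf), (V + / c ^ 2 + M * V). split; [|split; [|split]].
  - apply (lipschitz2_clamp (fun (_ : R) y => y) _ c C (- V) V); try lra.
    intros x y x' y' _ _ _ _. pose proof (Rabs_pos (x - x')). pose proof (Rabs_pos (y - y')). nra.
  - apply (lipschitz2_clamp (damped_field delta) _ c C (- V) V); try lra.
    intros x y x' y' Hx Hx' Hy Hy'.
    eapply Rle_trans; [apply (damped_field_lipschitz delta M D c C V); auto|].
    + intros u Hu. apply HM. lra.
    + apply Rabs_le. lra.
    + apply Rabs_le. lra.
    + pose proof (Rabs_pos (x - x')). pose proof (Rabs_pos (y - y')).
      apply Rmult_le_compat_r; [lra|].
      unfold Lf. lra.
  - intros _ y. pose proof (HVclamp y). pose proof (Rinv_0_lt_compat _ (pow_lt c 2 Hc)).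
    pose proof (Rmult_le_pos M V HM0 HV). lra.
  - intros x y. eapply Rle_trans; [apply (damped_field_bounded delta M c C V); auto|].
    + intros u Hu. apply HM. lra.
    + apply clamp_bounds. lra.
    + lra.
Qed.

Lemma small_step_exists (L B m T : R) : 0 <= L -> 0 <= B -> 0 < m -> 0 < T ->
  exists eta, 0 < eta /\ 4 * L * eta <= 1 /\ eta * B <= m /\ eta <= T.
Proof.
  intros HL HB Hm HT.
  exists (Rmin (/ (4 * (L + 1))) (Rmin (m / (B + 1)) T)).
  set (eta := Rmin (/ (4 * (L + 1))) (Rmin (m / (B + 1)) T)).
  assert (H1 : eta <= / (4 * (L + 1))) by apply Rmin_l.
  assert (H2 : eta <= m / (B + 1)) by (eapply Rle_trans; [apply Rmin_r | apply Rmin_l]).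
  assert (H3 : eta <= T) by (eapply Rle_trans; [apply Rmin_r | apply Rmin_r]).
  assert (Heta : 0 < eta).
  { apply Rmin_pos; [apply Rinv_0_lt_compat; lra|].
    apply Rmin_pos; [apply Rdiv_lt_0_compat|]; lra. }
  apply Rmult_le_compat_l with (r := 4 * (L + 1)) in H1; [|lra].
  rewrite Rinv_r in H1 by lra.
  apply Rmult_le_compat_l with (r := B + 1) in H2; [|lra].
  replace ((B + 1) * (m / (B + 1))) with m in H2 by (field; lra).
  repeat split; nra.
Qed.

(* The step eta does not depend on the initial data: this is what allows starting the flow at
   alpha + eta / 2 below. *)
Lemma damped_local_flow (delta : R -> R) (M c C V T : R) :
  (forall x, 0 < x -> Rabs (delta x) <= M) ->
  (forall x, 0 < x -> ex_derive delta x /\ continuous (Derive delta) x) ->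
  0 < c -> c <= C -> 0 <= V -> 0 < T ->
  exists eta, 0 < eta <= T /\ forall ts x0 y0, c <= x0 <= C -> Rabs y0 <= V ->
    exists X Y : R -> R, X ts = x0 /\
      (forall t, ts - eta < t < ts + eta -> 0 < X t /\
        is_derive X t (Y t) /\ is_derive Y t (damped_field delta (X t) (Y t))) /\
      (forall (r dr : R -> R) (a : R), ts - eta <= a < ts ->
        (forall t, a < t < ts + eta -> c <= r t <= C /\ Rabs (dr t) <= V /\
          is_derive r t (dr t) /\ is_derive dr t (damped_field delta (r t) (dr t))) ->
        r ts = x0 -> dr ts = y0 -> forall t, a < t < ts + eta -> X t = r t).
Proof.
  intros HM HC1 Hc HcC HV HT.
  destruct (clamped_damped_system_regular delta M (c / 2) (C + 1) (V + 1) HM HC1)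
    as [L [B [HL1 [HL2 [HB1 HB2]]]]]; try lra.
  set (F1 := fun (_ : R) y => clamp (- (V + 1)) (V + 1) y) in *.
  set (F2 := fun x y => damped_field delta (clamp (c / 2) (C + 1) x) (clamp (- (V + 1)) (V + 1) y))
    in *.
  pose proof (lipschitz2_nonneg _ _ HL1) as HL.
  assert (HB : 0 <= B) by (eapply Rle_trans; [apply Rabs_pos | apply (HB1 0 0)]).
  set (m := Rmin (c / 2) (1 / 2)).
  assert (m <= c / 2) by apply Rmin_l. assert (m <= 1 / 2) by apply Rmin_r.
  destruct (small_step_exists L B m T HL HB ltac:(apply Rmin_pos; lra) HT)
    as [eta [Heta [Heta4L [HetaB HetaT]]]].
  exists eta. split; [lra|]. intros ts x0 y0 Hx0 Hy0.
  destruct (picard_existence ts eta Heta F1 F2 B L x0 y0 HB1 HB2 HL1 HL2 Heta4L)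
    as [X [Y [HX0 [HY0 [HXY Hdev]]]]].
  assert (Hin : forall t, c / 2 <= X t <= C + 1 /\ - (V + 1) <= Y t <= V + 1).
  { intros t. destruct (Hdev t) as [Q1 Q2].
    revert Q1 Q2 Hy0. unfold Rabs. repeat destruct Rcase_abs; intros; lra. }
  exists X, Y. split; [exact HX0 | split].
  - intros t Ht. destruct (HXY t Ht) as [HX HY]. unfold F1, F2 in HX, HY.
    pose proof (Hin t). rewrite !clamp_id in HX by lra. rewrite !clamp_id in HY by lra.
    split; [lra | auto].
  - intros r dr a Ha Hr Hr0 Hdr0 t Ht.
    apply (planar_uniqueness F1 F2 L X Y r dr a (ts + eta) ts); auto; try lra.
    + intros u Hu. apply HXY. lra.
    + intros u Hu. destruct (Hr u Hu) as [Hru [Hdru [Hd1 Hd2]]]. apply Rabs_le_between in Hdru.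
      unfold F1, F2. rewrite !clamp_id by lra. auto.
Qed.

Theorem no_box_near_left_end (delta : R -> R) (M : R) (alpha : R) (omega : Rbar) (r : R -> R)
  (t1 c C Bd : R) :
  (forall x, 0 < x -> Rabs (delta x) <= M) ->
  (forall x, 0 < x -> ex_derive delta x /\ continuous (Derive delta) x) ->
  is_sol delta alpha omega r -> maximal_left delta alpha omega r ->
  alpha < t1 -> Rbar_lt t1 omega -> 0 < c ->
  (forall t, alpha < t <= t1 -> c <= r t <= C /\ Rabs (Derive r t) <= Bd) -> False.
Proof.
  intros HM HC1 Hsol Hmax Ht1 Ht1w Hc Hbox.
  destruct (Hbox t1 ltac:(lra)) as [HcC HBd].
  pose proof (Rabs_pos (Derive r t1)).
  destruct (damped_local_flow delta M c C Bd ((t1 - alpha) / 2) HM HC1) as [eta [Heta Hflow]];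
    try lra.
  set (ts := alpha + eta / 2).
  destruct (Hbox ts ltac:(unfold ts; lra)) as [Hrts HDrts].
  destruct (Hflow ts (r ts) (Derive r ts) Hrts HDrts) as [X [Y [HX0 [HXY Huniq]]]].
  apply (not_maximal_left_of_extension delta r X alpha omega (eta / 2) (3 * eta / 2));
    try lra; auto.
  - intros t Ht. apply (sol_at_of_planar delta X Y); [apply HXY; unfold ts; lra|].
    apply (locally_interval _ t (ts - eta) (ts + eta)); simpl; unfold ts in *; try lra.
    intros u Hu1 Hu2. apply HXY. unfold ts. lra.
  - intros t Ht. apply (Huniq r (Derive r) alpha); auto; unfold ts in *; try lra.
    intros u Hu. destruct (Hbox u ltac:(lra)) as [Hru Hdru].
    destruct (solves_on_of_is_sol delta r alpha t1 omega Hsol (Rbar_lt_le _ _ Ht1w) u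
      ltac:(lra)) as [_ [Hd1 Hd2]].
    auto.
Qed.

(** * A priori bounds near the left end *)

Lemma exp_le_exp_of_le (x y : R) : x <= y -> exp x <= exp y.
Proof. intros [Hlt | ->]; [left; apply exp_increasing, Hlt | right; reflexivity]. Qed.

Section IntegratingFactor.

Variables (delta r : R -> R) (a b c : R).
Hypothesis r_sol : solves_on delta a b r.
Hypothesis delta_cont : forall x, 0 < x -> continuous delta x.
Hypothesis c_in : a < c < b.

(* With damping' = delta (r), the equation gives (r' exp damping)' = - exp damping / r ^ 2. *)
Let damping (u : R) : R := RInt (fun s => delta (r s)) c u.

Let damping_at_c : damping c = 0 := RInt_point c _.

Let damping_integrand_continuous (t : R) : a < t < b -> continuous (fun s => delta (r s)) t.
Proof.
  intros Ht. destruct (r_sol t Ht) as [Hr [Hd _]].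
  apply (continuous_comp r delta); [apply (ex_derive_continuous r); eexists; exact Hd|].
  apply delta_cont, Hr.
Qed.

Let is_derive_damping (t : R) : a < t < b -> is_derive damping t (delta (r t)).
Proof.
  intros Ht. apply (is_derive_RInt (fun s => delta (r s)) damping c t);
    [|apply damping_integrand_continuous, Ht].
  apply (locally_interval _ t a b); [exact (proj1 Ht) | exact (proj2 Ht) |].
  intros u Hu1 Hu2. apply (RInt_correct (V := R_CompleteNormedModule)).
  apply (ex_RInt_continuous (V := R_CompleteNormedModule)). intros z Hz.
  apply damping_integrand_continuous. unfold Rmin, Rmax in Hz. destruct Rle_dec; simpl in *; lra.
Qed.

Let is_derive_integrating_factor (t : R) : a < t < b ->
  is_derive (fun u => Derive r u * exp (damping u)) t (- exp (damping t) / r t ^ 2).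
Proof.
  intros Ht. destruct (r_sol t Ht) as [Hr [_ Hd2]].
  replace (- exp (damping t) / r t ^ 2) with
    ((damped_field delta (r t) (Derive r t) + delta (r t) * Derive r t) * exp (damping t))
    by (unfold damped_field; field; lra).
  apply is_derive_mult_exp; [exact Hd2 | apply is_derive_damping, Ht].
Qed.

Let damping_bound (M : R) : (forall x, 0 < x -> 0 <= delta x <= M) ->
  forall t, a < t <= c -> Rabs (damping t) <= M * (c - a).
Proof.
  intros HM t Ht.
  assert (H0M : 0 <= M) by (pose proof (HM 1 ltac:(lra)); lra).
  eapply Rle_trans; [apply abs_RInt_le_const_Rabs with (M := M)|].
  - apply (ex_RInt_continuous (V := R_CompleteNormedModule)). intros z Hz.
    apply damping_integrand_continuous. rewrite Rmin_right, Rmax_left in Hz; lra.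
  - intros z Hz. rewrite Rmin_right, Rmax_left in Hz by lra.
    destruct (r_sol z ltac:(lra)) as [Hr _]. apply Rabs_le_between. pose proof (HM _ Hr). lra.
  - rewrite Rabs_left1 by lra. nra.
Qed.

Lemma derive_pos_left_of (t : R) : 0 < Derive r c -> a < t <= c -> 0 < Derive r t.
Proof.
  intros Hc Ht.
  assert (Hmono : Derive r c * exp (damping c) <= Derive r t * exp (damping t)).
  { apply (nonincreasing_of_derive_nonpos (fun u => Derive r u * exp (damping u))
      (fun u => - exp (damping u) / r u ^ 2));
      [lra | intros; apply is_derive_integrating_factor; lra |].
    intros u Hu. destruct (r_sol u ltac:(lra)) as [Hr _].
    pose proof (exp_pos (damping u)). pose proof (pow_lt (r u) 2 Hr).
    assert (0 < exp (damping u) / r u ^ 2) by (apply Rdiv_lt_0_compat; lra). lra. }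
  pose proof (exp_pos (damping c)). pose proof (exp_pos (damping t)).
  destruct (Rlt_le_dec 0 (Derive r t)) as [|Hle]; [assumption|nra].
Qed.

Let integrating_factor_increment (M eps t : R) : (forall x, 0 < x -> 0 <= delta x <= M) ->
  0 < eps -> (forall t, a < t <= c -> eps <= r t) -> a < t <= c ->
  Rabs (Derive r c - Derive r t * exp (damping t)) <= exp (M * (c - a)) / eps ^ 2 * (c - t).
Proof.
  intros HM Heps Hlow Ht.
  replace (Derive r c) with (Derive r c * exp (damping c)) by (rewrite damping_at_c, exp_0; ring).
  rewrite <- (Rminus_0_r (_ - _)), <- (Rmult_0_l (c - t)).
  apply (increment_near_linear (fun u => Derive r u * exp (damping u))
    (fun u => - exp (damping u) / r u ^ 2));
    [lra | intros; apply is_derive_integrating_factor; lra |].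
  intros u Hu. pose proof (Hlow u ltac:(lra)). pose proof (pow_lt eps 2 Heps).
  assert (Hr2 : eps ^ 2 <= r u ^ 2) by (apply pow_incr; lra).
  assert (HD : damping u <= M * (c - a))
    by (pose proof (damping_bound M HM u ltac:(lra)) as HD; apply Rabs_le_between in HD; lra).
  unfold Rdiv. rewrite Rminus_0_r, Rabs_mult, Rabs_inv, Rabs_Ropp,
    (Rabs_pos_eq (exp _)), (Rabs_pos_eq (r u ^ 2)) by (lra || (left; apply exp_pos)).
  apply Rmult_le_compat; [left; apply exp_pos | left; apply Rinv_0_lt_compat; nra | |].
  - apply exp_le_exp_of_le, HD.
  - apply Rinv_le_contravar; lra.
Qed.

Lemma derive_bounded_of_lower_bound (M eps : R) : (forall x, 0 < x -> 0 <= delta x <= M) ->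
  0 < eps -> (forall t, a < t <= c -> eps <= r t) ->
  exists Bd, forall t, a < t <= c -> Rabs (Derive r t) <= Bd.
Proof.
  intros HM Heps Hlow.
  assert (H0M : 0 <= M) by (pose proof (HM 1 ltac:(lra)); lra).
  set (E := exp (M * (c - a))).
  set (K := E / eps ^ 2).
  assert (HK : 0 < K) by (apply Rdiv_lt_0_compat; [apply exp_pos | apply pow_lt; lra]).
  exists ((Rabs (Derive r c) + K * (c - a)) * E). intros t Ht.
  pose proof (integrating_factor_increment M eps t HM Heps Hlow Ht) as Hinc. fold E K in Hinc.
  assert (Hlo : / E <= exp (damping t)).
  { pose proof (damping_bound M HM t Ht) as HD. apply Rabs_le_between in HD.
    unfold E. rewrite <- exp_Ropp. apply exp_le_exp_of_le. lra. }
  assert (Habs : Rabs (Derive r t) * exp (damping t) <= Rabs (Derive r c) + K * (c - a)).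
  { rewrite <- (Rabs_pos_eq (exp (damping t))) by (left; apply exp_pos). rewrite <- Rabs_mult.
    pose proof (Rabs_triang_inv (Derive r t * exp (damping t)) (Derive r c)).
    rewrite Rabs_minus_sym in Hinc. assert (K * (c - t) <= K * (c - a)) by nra. lra. }
  assert (HE : 0 < E) by apply exp_pos.
  assert (Rabs (Derive r t) * / E <= Rabs (Derive r c) + K * (c - a)).
  { pose proof (Rabs_pos (Derive r t)).
    apply Rle_trans with (Rabs (Derive r t) * exp (damping t)); [apply Rmult_le_compat_l|]; lra. }
  replace (Rabs (Derive r t)) with (Rabs (Derive r t) * / E * E) by (field; lra).
  apply Rmult_le_compat_r; lra.
Qed.

Lemma box_of_lower_bound (M eps : R) : (forall x, 0 < x -> 0 <= delta x <= M) -> 0 < eps ->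
  (forall t, a < t <= c -> eps <= r t) ->
  exists C Bd, forall t, a < t <= c -> eps <= r t <= C /\ Rabs (Derive r t) <= Bd.
Proof.
  intros HM Heps Hlow.
  destruct (derive_bounded_of_lower_bound M eps HM Heps Hlow) as [Bd HBd].
  exists (r c + Bd * (c - a)), Bd. intros t Ht. split; [split; [auto|] | auto].
  assert (Hinc : Rabs (r c - r t - 0 * (c - t)) <= Bd * (c - t)).
  { apply (increment_near_linear r (Derive r)); [lra | |].
    - intros u Hu. apply r_sol. lra.
    - intros u Hu. rewrite Rminus_0_r. apply HBd. lra. }
  rewrite Rmult_0_l, Rminus_0_r in Hinc. apply Rabs_le_between in Hinc.
  pose proof (Rabs_pos (Derive r t)). pose proof (HBd t Ht). nra.
Qed.

End IntegratingFactor.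

(** * Energy *)

Lemma damped_slope_bound (d M A s v : R) : 0 <= d <= M -> 1 <= A -> 0 < s -> 0 < v ->
  v ^ 2 <= 2 * A ^ 2 + 2 / s ^ 2 -> 0 <= - d * v ^ 2 / (2 * A) + M * v + M * v / s.
Proof.
  intros Hd HA Hs Hv Hv2.
  set (q := / s). assert (Hq : 0 < q) by (apply Rinv_0_lt_compat; lra).
  replace (2 / s ^ 2) with (2 * q ^ 2) in Hv2 by (unfold q; field; lra).
  assert (Hspeed : v <= 2 * A * (1 + q)).
  { assert (Hbig : 2 * A ^ 2 + 2 * q ^ 2 <= (2 * A * (1 + q)) ^ 2).
    { assert (0 <= (A ^ 2 - 1) * q ^ 2) by (apply Rmult_le_pos; [nra | apply pow2_ge_0]).
      assert (0 <= A ^ 2 * q) by (apply Rmult_le_pos; [apply pow2_ge_0 | lra]). nra. }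
    apply Rsqr_incr_0_var; [rewrite !Rsqr_pow2; lra | nra]. }
  replace (- d * v ^ 2 / (2 * A) + M * v + M * v / s) with
    ((2 * A * M * v * (1 + q) - d * v ^ 2) / (2 * A)) by (unfold q; field; lra).
  apply Rdiv_le_0_compat; [|lra].
  assert (d * v ^ 2 <= M * v ^ 2) by (apply Rmult_le_compat_r; [apply pow2_ge_0 | lra]).
  assert (M * v * v <= M * v * (2 * A * (1 + q))) by (apply Rmult_le_compat_l; nra).
  nra.
Qed.

Section Energy.

Variables (delta r : R -> R) (a b : R).
Hypothesis r_sol : solves_on delta a b r.

Lemma is_derive_energy (t : R) : a < t < b ->
  is_derive (energy r) t (- delta (r t) * (Derive r t) ^ 2).
Proof.
  intros Ht. destruct (r_sol t Ht) as [Hr [H1 H2]]. unfold energy.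
  auto_derive; [repeat split; try (eexists; eauto); lra|].
  replace (Derive (fun x => Derive r x) t) with (damped_field delta (r t) (Derive r t))
    by (symmetry; now apply is_derive_unique).
  replace (Derive (fun x => r x) t) with (Derive r t) by (symmetry; now apply is_derive_unique).
  unfold damped_field. field. lra.
Qed.

Let is_derive_energy_potential (M c0 u : R) : a < u < b -> 1 <= energy r u + c0 ->
  is_derive (fun u => sqrt (energy r u + c0) + M * r u + 2 * M * sqrt (r u)) u
    (- delta (r u) * (Derive r u) ^ 2 / (2 * sqrt (energy r u + c0))
     + M * Derive r u + M * Derive r u / sqrt (r u)).
Proof.
  intros Hu Hc0. destruct (r_sol u Hu) as [Hr [H1 H2]].
  pose proof (is_derive_energy u Hu) as HE.
  auto_derive; [repeat split; try (eexists; eauto); lra|].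
  replace (Derive (fun x => energy r x) u) with (- delta (r u) * (Derive r u) ^ 2)
    by (symmetry; now apply is_derive_unique).
  replace (Derive (fun x => r x) u) with (Derive r u) by (symmetry; now apply is_derive_unique).
  assert (0 < sqrt (energy r u + c0)) by (apply sqrt_lt_R0; lra).
  assert (0 < sqrt (r u)) by (apply sqrt_lt_R0; lra).
  field. lra.
Qed.

Hypothesis delta_nonneg : forall x, 0 < x -> 0 <= delta x.

Lemma energy_nonincreasing (x y : R) : a < x -> x <= y -> y < b -> energy r y <= energy r x.
Proof.
  intros Hx Hxy Hy.
  apply (nonincreasing_of_derive_nonpos _ (fun t => - delta (r t) * (Derive r t) ^ 2)); [lra | |].
  - intros t Ht. apply is_derive_energy. lra.
  - intros t Ht. destruct (r_sol t ltac:(lra)) as [Hr _].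
    pose proof (delta_nonneg _ Hr). pose proof (pow2_ge_0 (Derive r t)). nra.
Qed.

Lemma energy_bounded_above (M c : R) : (forall x, 0 < x -> delta x <= M) -> a < c < b ->
  (forall t, a < t <= c -> 0 < Derive r t) -> exists K, forall t, a < t <= c -> energy r t <= K.
Proof.
  intros HM Hc Hpos.
  set (c0 := 1 + Rabs (energy r c)).
  assert (Hc0 : forall t, a < t <= c -> 1 <= energy r t + c0).
  { intros t Ht. pose proof (energy_nonincreasing t c ltac:(lra) ltac:(lra) ltac:(lra)).
    pose proof (Rle_abs (- energy r c)). rewrite Rabs_Ropp in *. unfold c0. lra. }
  (* With A = sqrt (h + c0) >= 1 and r'^2 = 2 h + 2 / r, one gets A' >= - M r' (1 + 1 / sqrt r),
     which is minus the derivative of M r + 2 M sqrt r. *)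
  set (Psi := fun u => sqrt (energy r u + c0) + M * r u + 2 * M * sqrt (r u)).
  assert (Hmono : forall t, a < t <= c -> Psi t <= Psi c).
  { intros t Ht.
    apply (nondecreasing_of_derive_nonneg Psi (fun u =>
      - delta (r u) * (Derive r u) ^ 2 / (2 * sqrt (energy r u + c0))
      + M * Derive r u + M * Derive r u / sqrt (r u))); [lra | |].
    - intros u Hu. apply is_derive_energy_potential; [lra | apply Hc0; lra].
    - intros u Hu. destruct (r_sol u ltac:(lra)) as [Hr _].
      pose proof (Hc0 u ltac:(lra)). pose proof (sqrt_sqrt _ (Rlt_le _ _ Hr)).
      pose proof (sqrt_sqrt (energy r u + c0) ltac:(lra)).
      apply damped_slope_bound.
      + split; [apply delta_nonneg | apply HM]; exact Hr.
      + rewrite <- sqrt_1. apply sqrt_le_1_alt. lra.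
      + apply sqrt_lt_R0, Hr.
      + apply Hpos. lra.
      + replace (sqrt (energy r u + c0) ^ 2) with (energy r u + c0) by (simpl; lra).
        replace (sqrt (r u) ^ 2) with (r u) by (simpl; lra).
        assert (Hv : Derive r u ^ 2 = 2 * energy r u + 2 / r u) by (unfold energy; field; lra).
        pose proof (Rabs_pos (energy r c)). unfold c0. lra. }
  exists (Psi c ^ 2). intros t Ht. specialize (Hmono t Ht). destruct (r_sol t ltac:(lra)) as [Hr _].
  pose proof (Hc0 t Ht). pose proof (sqrt_pos (r t)). pose proof (sqrt_pos (energy r t + c0)).
  pose proof (sqrt_sqrt (energy r t + c0) ltac:(lra)).
  assert (0 <= M) by (pose proof (delta_nonneg 1 ltac:(lra)); pose proof (HM 1 ltac:(lra)); lra).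
  assert (sqrt (energy r t + c0) <= Psi c) by (unfold Psi in *; nra).
  unfold c0 in *. pose proof (Rabs_pos (energy r c)). nra.
Qed.

Lemma energy_lim_exists (M c : R) : (forall x, 0 < x -> delta x <= M) -> a < c < b ->
  (forall t, a < t <= c -> 0 < Derive r t) ->
  exists L, filterlim (energy r) (at_right a) (locally L).
Proof.
  intros HM Hc Hpos. destruct (energy_bounded_above M c HM Hc Hpos) as [K HK].
  apply (nonincreasing_bounded_at_right (energy r) a c K); [lra | | exact HK].
  intros x y Hx Hxy Hy. apply energy_nonincreasing; lra.
Qed.

End Energy.

(** * Asymptotics at the left end *)

Section Asymptotics.

Variables (delta r : R -> R) (a b c e0 : R).
Hypothesis r_sol : solves_on delta a b r.
Hypothesis c_in : a < c < b.
Hypothesis r_increasing : forall t, a < t <= c -> 0 < Derive r t.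
Hypothesis r_lim : filterlim r (at_right a) (locally 0).
Hypothesis energy_lim : filterlim (energy r) (at_right a) (locally e0).

Lemma speed_sqrt_lim : filterlim (fun t => Derive r t * sqrt (r t)) (at_right a) (locally (sqrt 2)).
Proof.
  (* (r' sqrt r)^2 = 2 h r + 2, and h r tends to 0. *)
  apply (filterlim_ext_loc (fun t => sqrt (2 * (energy r t * r t) + 2))).
  - apply (at_right_Ioc a c); [lra|]. intros t Ht.
    destruct (r_sol t ltac:(lra)) as [Hr _]. pose proof (r_increasing t Ht).
    pose proof (sqrt_pos (r t)). pose proof (sqrt_sqrt (r t) ltac:(lra)) as Hsq.
    rewrite <- (sqrt_square (Derive r t * sqrt (r t))) by nra. f_equal.
    replace (Derive r t * sqrt (r t) * (Derive r t * sqrt (r t)))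
      with (Derive r t * Derive r t * (sqrt (r t) * sqrt (r t))) by ring.
    rewrite Hsq. unfold energy. field. lra.
  - replace (sqrt 2) with (sqrt (2 * (e0 * 0) + 2)) by (f_equal; ring).
    eapply (filterlim_comp _ _ _ (fun t => energy r t * r t) (fun x => sqrt (2 * x + 2))).
    + apply (filterlim_comp_2 (energy r) r Rmult energy_lim r_lim), (filterlim_mult e0 0).
    + apply (ex_derive_continuous (fun x => sqrt (2 * x + 2))). auto_derive.
      change (mult e0 0) with (e0 * 0). lra.
Qed.

Lemma three_halves_power_lim :
  filterlim (fun t => r t * sqrt (r t) / (t - a)) (at_right a) (locally (3 / 2 * sqrt 2)).
Proof.
  apply (at_right_div_of_derive _ (fun t => 3 / 2 * (Derive r t * sqrt (r t))) a c); [lra | | |].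
  - intros t Ht. destruct (r_sol t ltac:(lra)) as [Hr [Hd _]].
    auto_derive; [repeat split; try (eexists; eauto); lra|].
    replace (Derive (fun x => r x) t) with (Derive r t) by (symmetry; now apply is_derive_unique).
    pose proof (sqrt_lt_R0 _ Hr). pose proof (sqrt_sqrt (r t) ltac:(lra)) as Hsq.
    rewrite <- Hsq at 2. field. lra.
  - assert (Hsqrt : filterlim (fun t => sqrt (r t)) (at_right a) (locally (sqrt 0))).
    { apply (filterlim_comp _ _ _ r sqrt _ _ _ r_lim).
      apply continuity_pt_filterlim, continuity_pt_sqrt. lra. }
    replace (locally 0) with (locally (0 * sqrt 0)) by (f_equal; ring).
    apply (filterlim_comp_2 r (fun t => sqrt (r t)) Rmult r_lim Hsqrt), (filterlim_mult 0 (sqrt 0)).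
  - apply (filterlim_comp _ _ _ (fun t => Derive r t * sqrt (r t)) (fun x => 3 / 2 * x) _ _ _
      speed_sqrt_lim). apply (ex_derive_continuous (fun x => 3 / 2 * x)). auto_derive. auto.
Qed.

Lemma Rpower_three_halves_ratio (x s : R) : 0 < x -> 0 < s ->
  Rpower (x * sqrt x / s) (2 / 3) = x / Rpower s (2 / 3).
Proof.
  intros Hx Hs. pose proof (sqrt_lt_R0 _ Hx).
  assert (Hln : ln (sqrt x) = / 2 * ln x)
    by (rewrite <- Rpower_sqrt, ln_Rpower by lra; reflexivity).
  unfold Rpower, Rdiv. rewrite !ln_mult, ln_Rinv, Hln, <- exp_Ropp by
    (try apply Rinv_0_lt_compat; try apply Rmult_lt_0_compat; lra).
  transitivity (exp (ln x + - (2 * / 3 * ln s))); [f_equal; field |].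
  rewrite exp_plus, exp_ln by lra. reflexivity.
Qed.

Lemma Rpower_three_halves_sqrt2 : Rpower (3 / 2 * sqrt 2) (2 / 3) = Rpower (9 / 2) (1 / 3).
Proof.
  assert (Hs : sqrt 2 * sqrt 2 = 2) by (apply sqrt_sqrt; lra).
  assert (Hpos : 0 < 3 / 2 * sqrt 2) by (pose proof (sqrt_lt_R0 2 ltac:(lra)); lra).
  replace (2 / 3) with (INR 2 * (1 / 3)) by (simpl; field).
  rewrite <- Rpower_mult, Rpower_pow by exact Hpos. f_equal. simpl. nra.
Qed.

Theorem two_thirds_power_lim :
  filterlim (fun t => r t / Rpower (t - a) (2 / 3)) (at_right a) (locally (Rpower (9 / 2) (1 / 3))).
Proof.
  apply (filterlim_ext_loc (fun t => Rpower (r t * sqrt (r t) / (t - a)) (2 / 3))).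
  - apply (at_right_Ioc a c); [lra|]. intros t Ht. apply Rpower_three_halves_ratio; [|lra].
    apply r_sol. lra.
  - rewrite <- Rpower_three_halves_sqrt2.
    apply (filterlim_comp _ _ _ _ (fun u => Rpower u (2 / 3)) _ _ _ three_halves_power_lim).
    apply (ex_derive_continuous (fun u => Rpower u (2 / 3))). unfold Rpower. auto_derive.
    pose proof (sqrt_lt_R0 2 ltac:(lra)). lra.
Qed.

End Asymptotics.

Lemma Rbar_exists_between (x : R) (omega : Rbar) : Rbar_lt x omega ->
  exists b, x < b /\ Rbar_le b omega.
Proof.
  destruct omega as [w | |]; simpl; intros H; try contradiction.
  - exists w. split; [lra | apply Rle_refl].
  - exists (x + 1). split; [lra | exact I].
Qed.

Section LeftEnd.

Variables (delta : R -> R) (M alpha : R) (omega : Rbar) (r : R -> R).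
Hypothesis delta_range : forall x, 0 < x -> 0 <= delta x <= M.
Hypothesis delta_C1 : forall x, 0 < x -> ex_derive delta x /\ continuous (Derive delta) x.
Hypothesis r_sol : is_sol delta alpha omega r.
Hypothesis r_maxl : maximal_left delta alpha omega r.

Let delta_cont (x : R) : 0 < x -> continuous delta x.
Proof. intros Hx. apply (ex_derive_continuous delta), delta_C1, Hx. Qed.

Lemma small_values_near_left_end (t1 eps : R) : alpha < t1 -> Rbar_lt t1 omega -> 0 < eps ->
  exists t, alpha < t <= t1 /\ r t < eps.
Proof.
  intros Ht1 Ht1w Heps. apply NNPP. intros Hnone.
  assert (Hlow : forall t, alpha < t <= t1 -> eps <= r t).
  { intros t Ht. apply Rnot_lt_le. intros Hlt. apply Hnone. exists t. auto. }
  destruct (Rbar_exists_between t1 omega Ht1w) as [b [Hb Hbw]].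
  pose proof (solves_on_of_is_sol delta r alpha b omega r_sol Hbw) as Hs.
  destruct (box_of_lower_bound delta r alpha b t1 Hs delta_cont ltac:(lra) M eps delta_range
    Heps Hlow) as [C [Bd Hbox]].
  apply (no_box_near_left_end delta M alpha omega r t1 eps C Bd); auto.
  intros x Hx. apply Rabs_le_between. pose proof (delta_range x Hx). lra.
Qed.

Lemma derive_pos_near_left_end : Rbar_lt alpha omega ->
  exists t1, alpha < t1 /\ Rbar_lt t1 omega /\ forall t, alpha < t <= t1 -> 0 < Derive r t.
Proof.
  intros Hint. destruct (Rbar_exists_between alpha omega Hint) as [b [Hb Hbw]].
  pose proof (solves_on_of_is_sol delta r alpha b omega r_sol Hbw) as Hs.
  set (t0 := (alpha + b) / 2).
  assert (Ht0w : Rbar_lt t0 omega)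
    by (eapply Rbar_lt_le_trans; [|exact Hbw]; simpl; unfold t0; lra).
  destruct (classic (exists t1, alpha < t1 <= t0 /\ 0 < Derive r t1)) as [[t1 [Ht1 Hpos]] | Hneg].
  - exists t1. split; [lra | split].
    + eapply Rbar_le_lt_trans; [|exact Ht0w]. simpl. lra.
    + intros t Ht. apply (derive_pos_left_of delta r alpha b t1); auto; unfold t0 in Ht1; lra.
  - exfalso. destruct (Hs t0 ltac:(unfold t0; lra)) as [Hr0 _].
    destruct (small_values_near_left_end t0 (r t0) ltac:(unfold t0; lra) Ht0w Hr0)
      as [t [Ht Hrt]].
    enough (r t0 <= r t) by lra.
    apply (nonincreasing_of_derive_nonpos r (Derive r));
      [lra | intros; apply Hs; unfold t0 in *; lra |].
    intros u Hu. apply Rnot_lt_le. intros Hlt. apply Hneg. exists u. split; [lra | exact Hlt].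
Qed.

Lemma lim_at_left_end (t1 : R) : alpha < t1 -> Rbar_lt t1 omega ->
  (forall t, alpha < t <= t1 -> 0 < Derive r t) -> filterlim r (at_right alpha) (locally 0).
Proof.
  intros Ht1 Ht1w Hpos. destruct (Rbar_exists_between t1 omega Ht1w) as [b [Hb Hbw]].
  pose proof (solves_on_of_is_sol delta r alpha b omega r_sol Hbw) as Hs.
  apply (at_right_lim0_of_nondecreasing r alpha t1).
  - intros x y Hx Hxy Hy. apply (nondecreasing_of_derive_nonneg r (Derive r)); [lra | |].
    + intros u Hu. apply Hs. lra.
    + intros u Hu. left. apply Hpos. lra.
  - intros t Ht. left. apply Hs. lra.
  - intros eps Heps. apply small_values_near_left_end; auto.
Qed.

End LeftEnd.

Theorem lemma8p1
  (delta : R -> R)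
  (delta_nonneg : forall x : R, 0 < x -> 0 <= delta x)
  (delta_bounded : exists M : R, forall x : R, 0 < x -> Rabs (delta x) <= M)
  (delta_C1 : forall x : R, 0 < x -> ex_derive delta x /\ continuous (Derive delta) x)
  (alpha : R) (omega : Rbar) (r : R -> R)
  (Hint : Rbar_lt alpha omega)
  (Hsol : is_sol delta alpha omega r)
  (Hmaxl : maximal_left delta alpha omega r)
  (Hmaxr : maximal_right delta alpha omega r) :
  filterlim r (at_right alpha) (locally 0) /\
  (exists L : R, filterlim (energy r) (at_right alpha) (locally L)) /\
  filterlim (fun t => r t / Rpower (t - alpha) (2 / 3)) (at_right alpha)
    (locally (Rpower (9 / 2) (1 / 3))).
Proof.
  destruct delta_bounded as [M HM].
  assert (Hrange : forall x, 0 < x -> 0 <= delta x <= M).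
  { intros x Hx. pose proof (HM x Hx). pose proof (Rle_abs (delta x)).
    pose proof (delta_nonneg x Hx). lra. }
  destruct (derive_pos_near_left_end delta M alpha omega r Hrange delta_C1 Hsol Hmaxl Hint)
    as [t1 [Ht1 [Ht1w Hpos]]].
  destruct (Rbar_exists_between t1 omega Ht1w) as [b [Hb Hbw]].
  pose proof (solves_on_of_is_sol delta r alpha b omega Hsol Hbw) as Hs.
  pose proof (lim_at_left_end delta M alpha omega r Hrange delta_C1 Hsol Hmaxl t1 Ht1 Ht1w Hpos)
    as Hr0.
  destruct (energy_lim_exists delta r alpha b Hs delta_nonneg M t1
    (fun x Hx => proj2 (Hrange x Hx)) ltac:(lra) Hpos) as [L HL].
  split; [exact Hr0 | split; [exists L; exact HL |]].
  exact (two_thirds_power_lim delta r alpha b t1 L Hs ltac:(lra) Hpos Hr0 HL).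
Qed.
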